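(* Let $\mu$ be a finite positive measure on $(\Omega,\mathcal B)$ with (countably many) atoms $A_1,A_2,\dots$ arranged so that $\mu(A_n)\ge\mu(A_{n+1})$, and let $C$ be the complement of the union of the atoms. For each $n$ put $B_n=C\cup\bigcup_{j>n}A_j$. Let $Z$ be a linear subspace of $L_\infty(\mu)$ which contains $L^0_\infty(C,\mu)=\{f\in L_\infty(\mu): f=0 \text{ off } C,\ \int f\,d\mu=0\}$ and contains the function $1_{A_n}-\frac{\mu(A_n)}{\mu(B_n)}1_{B_n}$ for every $n$ with $\mu(B_n)>0$. Then the weak$^*$ closure of $Z$ in $L_\infty(\mu)$ contains $L^0_\infty=\{f\in L_\infty(\mu):\int f\,d\mu=0\}$.
   Context: An atom of $\mu$ is a set $A$ with $\mu(A)>0$ such that each measurable subset of $A$ has measure $0$ or $\mu(A)$. The weak$^*$ topology on $L_\infty(\mu)$ is $\sigma(L_\infty,L_1)$. *)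

From HB Require Import structures.
From mathcomp Require Import all_boot all_order all_algebra.
From mathcomp Require Import all_classical all_reals all_analysis.
Set Implicit Arguments. Unset Strict Implicit. Unset Printing Implicit Defensive.
Import Order.TTheory GRing.Theory Num.Theory.
Local Open Scope classical_set_scope.
Local Open Scope ring_scope.

Section Defs.
Context (d : measure_display) (T : measurableType d) (R : realType).
Variable mu : {measure set T -> \bar R}.

Definition is_atom (A : set T) : Prop :=
  measurable A /\ (0 < mu A)%E /\
  forall B, measurable B -> B `<=` A -> mu B = 0%E \/ mu B = mu A.

(* Elements of L_infty(mu) represented by measurable, essentially bounded
   functions (classes modulo mu-a.e. equality). *)
Definition Linf_fun (f : T -> R) : Prop :=
  measurable_fun setT f /\ exists M : R, {ae mu, forall x, `|f x| <= M}.

Definition ae_equal (f g : T -> R) : Prop := {ae mu, forall x, f x = g x}.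

(* f is in the sigma(L_infty, L_1)-closure of Z: every basic weak*
   neighbourhood {h : |int (h - f) g_i| < e, i < k} (g_i in L_1) meets Z. *)
Definition weakstar_closure (Z : set (T -> R)) (f : T -> R) : Prop :=
  forall (k : nat) (g : 'I_k -> T -> R) (e : R), 0 < e ->
    (forall i, mu.-integrable setT (EFin \o g i)) ->
    exists2 z, Z z &
      forall i, (`| \int[mu]_x ((f x - z x) * g i x)%:E | < e%:E)%E.

End Defs.

(* Index set of the atoms: None = infinitely many atoms (indices 0,1,2,...),
   Some k = exactly k atoms (indices 0..k-1). *)
Definition atom_idx (N : option nat) (n : nat) : Prop :=
  if N is Some k then (n < k)%N else True.

(* A measurable function is a.e. constant on every atom.  Say that h is
   tail-constant at M with value b if h = b a.e. on the tail
   U_{j >= M} A_j and h - b has integral 0 over C.  A bounded h with integral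
   0 that is tail-constant at M lies in Z up to a null set, by induction on M.
   At M = 0 it vanishes off C, so it belongs to L^0_infty(C).  At M + 1,
   subtracting the multiple of the generator 1_{A_M} - mu(A_M)/mu(B_M) 1_{B_M}
   (which is 1 on A_M and constant on B_M) that equalizes the values of h on
   A_M and on B_M makes h tail-constant at M, and it keeps h minus its tail
   value unchanged on C; if mu(B_M) = 0, h is already tail-constant at M.
   Given f in L^0_infty, replace it on the M-th tail by its mean c over C and
   subtract the constant that restores integral 0: the result z_M is
   tail-constant at M, and f - z_M is (f - c) 1_{tail M} plus a constant of
   order int_{tail M} |f - c|.  As the tails decrease to the empty set,
   dominated convergence makes int (f - z_M) g tend to 0 for every g in L_1,
   so every weak* neighbourhood of f meets Z. *)

From HB Require Import structures.
From mathcomp Require Import all_boot all_order all_algebra.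
From mathcomp Require Import all_classical all_reals all_analysis.
From mathcomp Require Import ring lra measurable_realfun.
Set Implicit Arguments. Unset Strict Implicit. Unset Printing Implicit Defensive.
Import Order.TTheory GRing.Theory Num.Theory.
Local Open Scope classical_set_scope.
Local Open Scope ring_scope.

Section bounded_mfun.
Context d {T : measurableType d} {R : realType} (mu : {measure set T -> \bar R}).

Definition bounded_mfun (h : T -> R) :=
  measurable_fun setT h /\ exists K, forall x, `|h x| <= K.

Lemma bounded_mfun_cst (r : R) : bounded_mfun (cst r).
Proof. by split; [exact: measurable_cst | exists `|r|]. Qed.

Lemma bounded_mfun_indic (S : set T) : measurable S -> bounded_mfun \1_S.
Proof.
move=> mS; split; first exact: measurable_indic.
by exists 1 => x; rewrite indicE; case: (_ \in _); rewrite ?normr1 ?normr0.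
Qed.

Lemma bounded_mfunD (f g : T -> R) :
  bounded_mfun f -> bounded_mfun g -> bounded_mfun (f \+ g).
Proof.
move=> [mf [Kf hf]] [mg [Kg hg]]; split; first exact: measurable_funD.
by exists (Kf + Kg) => x; rewrite (le_trans (ler_normD _ _)) ?lerD.
Qed.

Lemma bounded_mfunB (f g : T -> R) :
  bounded_mfun f -> bounded_mfun g -> bounded_mfun (f \- g).
Proof.
move=> [mf [Kf hf]] [mg [Kg hg]]; split; first exact: measurable_funB.
by exists (Kf + Kg) => x; rewrite (le_trans (ler_normB _ _)) ?lerD.
Qed.

Lemma bounded_mfunM (f g : T -> R) :
  bounded_mfun f -> bounded_mfun g -> bounded_mfun (f \* g).
Proof.
move=> [mf [Kf hf]] [mg [Kg hg]]; split; first exact: measurable_funM.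
by exists (Kf * Kg) => x /=; rewrite normrM ler_pM.
Qed.

Lemma bounded_mfun_Linf (h : T -> R) : bounded_mfun h -> Linf_fun mu h.
Proof. by move=> [mh [K hK]]; split => //; exists K; apply: aeW. Qed.

Lemma bounded_mfun_bounded (h : T -> R) (D : set T) :
  bounded_mfun h -> [bounded h x | x in D].
Proof.
move=> [_ [K hK]]; exists K; split => [|M KM x _]; first exact: num_real.
exact: le_trans (hK x) (ltW KM).
Qed.

Lemma bounded_mfun_integrableMl (h g : T -> R) : bounded_mfun h ->
  mu.-integrable setT (EFin \o g) -> mu.-integrable setT (EFin \o (h \* g)).
Proof.
move=> bh ig; have := integrableMr measurableT bh.1 (bounded_mfun_bounded setT bh) ig.
by apply: eq_integrable => // x _ /=; rewrite EFinM.
Qed.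

Lemma Linf_fun_ae_bounded_mfun (f : T -> R) :
  Linf_fun mu f -> exists2 g, bounded_mfun g & ae_equal mu f g.
Proof.
move=> [mf [K0 hK0]]; set K := `|K0|.
exists (cst (- K) \max (cst K \min f)).
  split; first by apply: measurable_maxr => //; exact: measurable_minr.
  exists K => x /=; rewrite ler_norml ge_max le_max le_min ge_min !lexx /=.
  have := normr_ge0 K0; rewrite -/K; lra.
apply: filterS hK0 => x fK0; have : `|f x| <= K := le_trans fK0 (ler_norm K0).
by rewrite ler_norml => /andP[? ?]; rewrite /= min_r // max_r.
Qed.

Hypothesis mufin : (mu setT < +oo)%E.

Lemma finite_measure_lty (S : set T) : measurable S -> (mu S < +oo)%E.
Proof. by move=> mS; apply: le_lt_trans mufin; rewrite le_measure ?inE. Qed.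

Lemma finite_measure_fin_num (S : set T) : measurable S -> mu S \is a fin_num.
Proof. by move=> mS; rewrite ge0_fin_numE ?measure_ge0 ?finite_measure_lty. Qed.

Lemma bounded_mfun_integrable (h : T -> R) :
  bounded_mfun h -> mu.-integrable setT (EFin \o h).
Proof.
by move=> bh; apply: measurable_bounded_integrable bh.1 (bounded_mfun_bounded _ bh).
Qed.

(* [mean D f = 0] when [mu D = 0]. *)
Definition mean (D : set T) (f : T -> R) := \int[mu]_(x in D) f x / fine (mu D).

Lemma Rintegral_subr_mean (D : set T) (f : T -> R) : measurable D ->
  bounded_mfun f -> \int[mu]_(x in D) (f x - mean D f) = 0.
Proof.
move=> mD bf; have iD h : bounded_mfun h -> mu.-integrable D (EFin \o h).
  by move=> bh; apply: integrableS measurableT mD (subsetT _) (bounded_mfun_integrable bh).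
rewrite RintegralB //; first last.
- exact (iD _ (bounded_mfun_cst (mean D f))).
- exact: iD.
rewrite Rintegral_cst //.
have [D0|Dn0] := eqVneq (fine (mu D)) 0; last by rewrite /mean divfK ?subrr.
rewrite D0 mulr0 subr0 /Rintegral null_set_integral //.
- by apply/measurable_EFinP; exact: measurable_funS measurableT _ bf.1.
- by apply/eqP; rewrite -fine_eq0 ?D0 ?finite_measure_fin_num.
Qed.

End bounded_mfun.

Section atom.
Context d {T : measurableType d} {R : realType} (mu : {measure set T -> \bar R}).

Lemma ae_notin_measure0 (E : set T) :
  measurable E -> mu E = 0%E -> {ae mu, forall x, ~ E x}.
Proof. by move=> mE E0; exists E; split => // x /= /contrapT. Qed.

Variable A : set T.
Hypotheses (atomA : is_atom mu A) (finA : (mu A < +oo)%E).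

Lemma atom_not_ae_notin : ~ {ae mu, forall x, ~ A x}.
Proof.
case: atomA => mA [A0 _] [N [mN N0 AN]].
have : (mu A <= mu N)%E by rewrite le_measure ?inE // => x Ax; apply: AN => /(_ Ax).
by rewrite N0 leNgt A0.
Qed.

Lemma atom_ae_dichotomy (S : set T) : measurable S ->
  {ae mu, forall x, A x -> S x} \/ {ae mu, forall x, A x -> ~ S x}.
Proof.
case: atomA => mA [_ subA] mS; have mAS := measurableI _ _ mA mS.
case: (subA _ mAS (@subIsetl _ A S)) => [AS0|ASA].
  by right; apply: filterS (ae_notin_measure0 mAS AS0) => x nAS Ax Sx; exact: nAS.
have : mu (A `\` S) = 0%E.
  rewrite measureD //; transitivity (mu A - mu A)%E; first by congr (_ - _)%E.
  by rewrite subee // ge0_fin_numE ?measure_ge0.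
move/(ae_notin_measure0 (measurableD mA mS)) => h; left; apply: filterS h => x nAS Ax.
by apply: contrapT => nSx; exact: nAS.
Qed.

Lemma atom_ae_ltr_or_ler (f : T -> R) (t : R) : measurable_fun setT f ->
  {ae mu, forall x, A x -> t < f x} \/ {ae mu, forall x, A x -> f x <= t}.
Proof.
move=> mf; have mt : measurable [set x | t < f x].
  by have := mf measurableT _ (measurable_itv `]t, +oo[); rewrite setTI preimage_itvoy.
case: (atom_ae_dichotomy mt) => [|h]; [by left | right].
by apply: filterS h => x + Ax => /(_ Ax) /negP; rewrite -leNgt.
Qed.

Lemma atom_ae_bounded (f : T -> R) : measurable_fun setT f -> exists s t,
  {ae mu, forall x, A x -> s < f x} /\ {ae mu, forall x, A x -> f x <= t}.
Proof.
move=> mf; have nat_gt (y : R) : exists n : nat, y < n%:R.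
  exists (Num.Def.archi_bound `|y|); apply: le_lt_trans (ler_norm y) _.
  exact: archi_boundP.
have [s hs] : exists s, {ae mu, forall x, A x -> s < f x}.
  apply: contrapT => nolow; apply: atom_not_ae_notin.
  have h n : {ae mu, forall x, A x -> f x <= - n%:R}.
    by case: (atom_ae_ltr_or_ler (- n%:R) mf) => // hn; exfalso; apply: nolow; exists (- n%:R).
  apply: filterS (ae_foralln h) => x fx Ax; have [n ltn] := nat_gt (- f x).
  by move: (fx n Ax); rewrite lerNr leNgt ltn.
have [t ht] : exists t, {ae mu, forall x, A x -> f x <= t}.
  apply: contrapT => noup; apply: atom_not_ae_notin.
  have h n : {ae mu, forall x, A x -> n%:R < f x}.
    by case: (atom_ae_ltr_or_ler n%:R mf) => // hn; exfalso; apply: noup; exists n%:R.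
  apply: filterS (ae_foralln h) => x fx Ax; have [n ltn] := nat_gt (f x).
  by move: (fx n Ax); rewrite ltNge (ltW ltn).
by exists s, t.
Qed.

Lemma atom_ae_cst (f : T -> R) : measurable_fun setT f ->
  exists a, {ae mu, forall x, A x -> f x = a}.
Proof.
move=> mf; have [s0 [t0 [hs0 ht0]]] := atom_ae_bounded mf.
pose S := [set s | {ae mu, forall x, A x -> s < f x}].
have S_ub s : S s -> s <= t0.
  move=> Ss; rewrite leNgt; apply/negP => t0s; apply: atom_not_ae_notin.
  apply: filterS2 Ss ht0 => x h1 h2 Ax.
  by move: (h2 Ax); rewrite leNgt (lt_trans t0s (h1 Ax)).
have supS : has_sup S by split; [exists s0 | exists t0 => s /S_ub].
exists (sup S).
have below n : {ae mu, forall x, A x -> sup S - n.+1%:R^-1 < f x}.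
  have n0 : 0 < n.+1%:R^-1 :> R by rewrite invr_gt0.
  have [s Ss lts] := sup_adherent n0 supS.
  by apply: filterS Ss => x h Ax; exact: lt_trans lts (h Ax).
have above n : {ae mu, forall x, A x -> f x <= sup S + n.+1%:R^-1}.
  case: (atom_ae_ltr_or_ler (sup S + n.+1%:R^-1) mf) => // /(sup_upper_bound supS).
  by rewrite leNgt ltrDl invr_gt0 ltr0Sn.
apply: filterS2 (ae_foralln below) (ae_foralln above) => x lo hi Ax.
apply/eqP; rewrite eq_le; apply/andP; split.
  by rewrite leNgt; apply/negP => /ltr_add_invr [n]; rewrite ltNge hi.
rewrite leNgt; apply/negP => /ltr_add_invr [n].
by rewrite -ltrBrDr => /(lt_trans (lo n Ax)); rewrite ltxx.
Qed.

End atom.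

Section vanishing_sets.
Context d {T : measurableType d} {R : realType} (mu : {measure set T -> \bar R}).

Lemma Rintegral_vanishing_sets_cvg0 (S : nat -> set T) (h : T -> R) :
  (forall M, measurable (S M)) -> (forall x, \forall M \near \oo, ~ S M x) ->
  mu.-integrable setT (EFin \o h) ->
  \int[mu]_(x in S M) h x @[M --> \oo] --> 0.
Proof.
move=> mS Sx0 ih; under eq_fun do rewrite Rintegral_mkcond.
suff : (\int[mu]_x ((EFin \o h) \_ (S M)) x)%E @[M --> \oo] --> 0%E.
  by under eq_fun do rewrite restrict_EFin; move/fine_cvgP => [].
have mh : measurable_fun setT h by apply/measurable_EFinP; exact: measurable_int ih.
rewrite -(integral0 mu setT).
apply: (@dominated_cvg _ _ _ mu _ measurableT _ _ (fun x => `|h x|%:E)) => [M|x _|//||M x _].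
- apply/(measurable_restrictT _ _).1 => //; apply/measurable_EFinP.
  exact: measurable_funS mh.
- apply: cvg_near_cst; apply: filterS (Sx0 x) => M nSx /=.
  by rewrite patchE memNset.
- exact: integrable_norm ih.
- by rewrite patchE; case: ifP; rewrite /= ?lee_fin ?normr0.
Qed.

End vanishing_sets.

Section tail_set.
Context (T : Type) (N : option nat) (A : nat -> set T).

Definition tail_set M := \bigcup_(j in [set j | atom_idx N j /\ (M <= j)%N]) A j.

Lemma tail_set0 : tail_set 0 = \bigcup_(n in [set n | atom_idx N n]) A n.
Proof. by apply/seteqP; split => x [j]; [case=> Ij _|]; exists j. Qed.

Lemma tail_setS M : atom_idx N M -> tail_set M = A M `|` tail_set M.+1.
Proof.
move=> IM; apply/seteqP; split => x.
  move=> [j [Ij Mj] Ajx]; have [<-|jM] := eqVneq j M; first by left.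
  by right; exists j => //; split => //; rewrite ltn_neqAle eq_sym jM.
by move=> [AMx|[j [Ij Mj] Ajx]]; [exists M|exists j => //; split => //; exact: ltnW].
Qed.

Lemma tail_set_idxN M : ~ atom_idx N M -> tail_set M = tail_set M.+1.
Proof.
move=> IM; apply/seteqP; split => x [j [Ij Mj] Ajx]; exists j => //; split => //.
  by rewrite ltn_neqAle Mj andbT; apply/eqP => jM; apply: IM; rewrite jM.
exact: ltnW.
Qed.

Hypothesis disjA :
  forall n m, atom_idx N n -> atom_idx N m -> n <> m -> A n `&` A m = set0.

Lemma notin_tail_set n M x : atom_idx N n -> (n < M)%N -> A n x -> ~ tail_set M x.
Proof.
move=> In nM Anx [j [Ij Mj] Ajx]; have nj : n <> j.
  by move=> nj; move: nM; rewrite nj ltnNge Mj.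
by have := disjA In Ij nj; rewrite -subset0 => /(_ x); apply.
Qed.

Lemma tail_set_near_notin x : \forall M \near \oo, ~ tail_set M x.
Proof.
have [[j [Ij _] Ajx]|xnA] := pselect (tail_set 0 x).
  by near=> M; apply: (notin_tail_set Ij _ Ajx); near: M; exact: nbhs_infty_gt.
near=> M => -[j [Ij _] Ajx]; apply: xnA; exists j => //.
Unshelve. all: by end_near.
Qed.

End tail_set.

Section Rintegral_extra.
Context d {T : measurableType d} {R : realType} (mu : {measure set T -> \bar R}).

Lemma EFin_Rintegral (D : set T) (h : T -> R) : measurable D ->
  mu.-integrable D (EFin \o h) ->
  (\int[mu]_(x in D) h x)%:E = (\int[mu]_(x in D) (h x)%:E)%E.
Proof. by move=> mD ih; rewrite fineK //; exact: integrable_fin_num. Qed.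

Lemma Rintegral_ae_cst (D : set T) (h : T -> R) (b : R) : measurable D ->
  measurable_fun D h -> {ae mu, forall x, D x -> h x = b} ->
  \int[mu]_(x in D) h x = b * fine (mu D).
Proof.
move=> mD mh hb; rewrite -Rintegral_cst //; congr fine.
apply: ae_eq_integral => //; first exact/measurable_EFinP.
by apply: filterS hb => x + Dx => /(_ Dx) ->.
Qed.

Lemma Rintegral_mulr_indic (S : set T) (h : T -> R) :
  \int[mu]_x (h x * \1_S x) = \int[mu]_(x in S) h x.
Proof.
rewrite [RHS]Rintegral_mkcond; apply: eq_Rintegral => x _.
by rewrite patchE indicE; case: (x \in S); rewrite ?mulr1 ?mulr0.
Qed.

Lemma Rintegral_indic (S : set T) : measurable S -> \int[mu]_x \1_S x = fine (mu S).
Proof.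
move=> mS; rewrite -[RHS]mul1r -Rintegral_cst // -[RHS]Rintegral_mulr_indic.
by apply: eq_Rintegral => x _; rewrite mul1r.
Qed.

End Rintegral_extra.

Section Z_ae.
Context d {T : measurableType d} {R : realType} (mu : {measure set T -> \bar R}).
Variable Z : set (T -> R).

Definition Z_ae (h : T -> R) := exists2 z, Z z & ae_equal mu z h.

Lemma Z_ae_eq (h h' : T -> R) : ae_equal mu h h' -> Z_ae h -> Z_ae h'.
Proof. by move=> hh' [z Zz zh]; exists z => //; apply: filterS2 zh hh' => x -> . Qed.

Hypothesis ZD : forall z1 z2, Z z1 -> Z z2 -> Z (fun x => z1 x + z2 x).
Hypothesis ZZ : forall (a : R) z, Z z -> Z (fun x => a * z x).

Lemma Z_aeD (h1 h2 : T -> R) : Z_ae h1 -> Z_ae h2 -> Z_ae (h1 \+ h2).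
Proof.
move=> [z1 Z1 e1] [z2 Z2 e2]; exists (fun x => z1 x + z2 x); first exact: ZD.
by apply: filterS2 e1 e2 => x -> ->.
Qed.

Lemma Z_aeZ (a : R) (h : T -> R) : Z_ae h -> Z_ae (cst a \* h).
Proof.
move=> [z Zz e]; exists (fun x => a * z x); first exact: ZZ.
by apply: filterS e => x ->.
Qed.

Hypothesis Zmeas : forall z, Z z -> Linf_fun mu z.

Lemma weakstar_closure_of_approx (f : T -> R) (phi : nat -> T -> R) :
  measurable_fun setT f -> (forall M, bounded_mfun (phi M)) ->
  (forall M, Z_ae (f \- phi M)) ->
  (forall g, mu.-integrable setT (EFin \o g) ->
    \int[mu]_x (phi M x * g x) @[M --> \oo] --> 0) ->
  weakstar_closure mu Z f.
Proof.
move=> mf bphi Zphi phi0 k g e e0 ig.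
have ev i : \forall M \near \oo, `|\int[mu]_x (phi M x * g i x)| < e.
  by apply: cvgr0_norm_lt e0; exact: phi0.
have [M /= HM] := filter_ex (filter_forall _ ev).
have [z Zz zf] := Zphi M; exists z => // i.
have mg : measurable_fun setT (g i) by apply/measurable_EFinP; exact: measurable_int (ig i).
have mz := (Zmeas Zz).1.
rewrite (@ae_eq_integral _ _ _ mu setT (fun x => (phi M x * g i x)%:E)) //.
- rewrite -EFin_Rintegral ?abse_EFin ?lte_fin //.
  exact: bounded_mfun_integrableMl (bphi M) (ig i).
- by apply/measurable_EFinP; apply: measurable_funM => //; exact: measurable_funB.
- by apply/measurable_EFinP; apply: measurable_funM => //; exact: (bphi M).1.
- by apply: filterS zf => x zx _; rewrite zx /= opprB addrC subrK.
Qed.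

End Z_ae.

Section atomic_part.
Context d {T : measurableType d} {R : realType} (mu : {measure set T -> \bar R}).
Variables (N : option nat) (A : nat -> set T) (Z : set (T -> R)).
Hypothesis mufin : (mu setT < +oo)%E.
Hypothesis atomA : forall n, atom_idx N n -> is_atom mu (A n).
Hypothesis disjA :
  forall n m, atom_idx N n -> atom_idx N m -> n <> m -> A n `&` A m = set0.

Let C := ~` \bigcup_(n in [set n | atom_idx N n]) A n.
Local Notation tail := (tail_set N A).
Let B M := C `|` tail M.+1.
Let r M := fine (mu (A M)) / fine (mu (B M)).
Let G M : T -> R := fun x => \1_(A M) x - r M * \1_(B M) x.

Let mA n : atom_idx N n -> measurable (A n).
Proof. by case/atomA. Qed.

Let mtail M : measurable (tail M).
Proof. by apply: bigcup_measurable => j [/mA]. Qed.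

Let mC : measurable C.
Proof. by apply: measurableC; exact: bigcup_measurable. Qed.

Let mB M : measurable (B M).
Proof. exact: measurableU. Qed.

Let finA n : atom_idx N n -> (mu (A n) < +oo)%E.
Proof. by move/mA; exact: finite_measure_lty. Qed.

Let atom_notin_B M x : atom_idx N M -> A M x -> ~ B M x.
Proof.
move=> IM AMx [Cx|Tx]; first by apply: Cx; exists M.
exact: (notin_tail_set disjA IM (ltnSn M) AMx Tx).
Qed.

Definition tail_cst M (h : T -> R) (b : R) :=
  {ae mu, forall x, tail M x -> h x = b} /\ \int[mu]_(x in C) (h x - b) = 0.

Lemma tail_cst0_ae_notin_C h b : bounded_mfun h -> \int[mu]_x h x = 0 ->
  tail_cst 0 h b -> {ae mu, forall x, ~ C x -> h x = 0}.
Proof.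
move=> bh h0 [hb hC]; rewrite tail_set0 in hb.
have ihb : mu.-integrable setT (EFin \o (h \- cst b)).
  exact (bounded_mfun_integrable mufin (bounded_mfunB bh (bounded_mfun_cst b))).
have : \int[mu]_x (h x - b) = 0.
  have mCc : measurable (~` C) by exact: measurableC.
  rewrite -(setUv C) Rintegral_setU ?setUv //; last exact/disj_setPCl.
  rewrite hC add0r (@Rintegral_ae_cst _ _ _ _ _ _ 0) ?mul0r //.
  - apply: (measurable_funS measurableT) => //.
    exact (measurable_funB bh.1 (measurable_cst b)).
  - by apply: filterS hb => x hx nCx; rewrite hx ?subrr //; apply: contrapT.
rewrite RintegralB //; first last.
- exact (bounded_mfun_integrable mufin (bounded_mfun_cst b)).
- exact (bounded_mfun_integrable mufin bh).
rewrite h0 Rintegral_cst // sub0r.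
move/eqP; rewrite oppr_eq0 mulf_eq0 => /orP[/eqP b0|].
  by apply: filterS hb => x hx nCx; rewrite hx -?b0 //; apply: contrapT.
by rewrite fine_eq0 ?finite_measure_fin_num // => /eqP /measure0_ae.
Qed.

Lemma tail_cst_of_null M h : atom_idx N M -> mu (B M) = 0%E ->
  measurable_fun setT h -> exists b, tail_cst M h b.
Proof.
move=> IM B0 mh; have [b hb] := atom_ae_cst (atomA IM) (finA IM) mh.
exists b; split.
  rewrite tail_setS //; apply: filterS2 hb (ae_notin_measure0 (mB M) B0).
  by move=> x hA nB [/hA //|Tx]; exfalso; apply: nB; right.
have C0 : mu C = 0%E.
  by apply/eqP; rewrite eq_le measure_ge0 andbT -B0 le_measure ?inE //; exact: subsetUl.
rewrite /Rintegral null_set_integral //; apply/measurable_EFinP.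
apply: (measurable_funS measurableT) => //.
exact (measurable_funB mh (measurable_cst b)).
Qed.

Lemma bounded_mfun_generator M : atom_idx N M -> bounded_mfun (G M).
Proof.
move=> IM; exact (bounded_mfunB (bounded_mfun_indic (mA IM))
  (bounded_mfunM (bounded_mfun_cst (r M)) (bounded_mfun_indic (mB M)))).
Qed.

Lemma Rintegral_generator M : atom_idx N M -> (0 < mu (B M))%E ->
  \int[mu]_x G M x = 0.
Proof.
move=> IM Bpos; rewrite RintegralB //; first last.
- exact (bounded_mfun_integrable mufin
    (bounded_mfunM (bounded_mfun_cst (r M)) (bounded_mfun_indic (mB M)))).
- exact (bounded_mfun_integrable mufin (bounded_mfun_indic (mA IM))).
rewrite RintegralZl //; last exact (bounded_mfun_integrable mufin (bounded_mfun_indic (mB M))).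
rewrite !Rintegral_indic //; last exact: mA.
rewrite /r; field.
by rewrite fine_eq0 ?finite_measure_fin_num // gt_eqF.
Qed.

Lemma generator_atom M x : atom_idx N M -> A M x -> G M x = 1.
Proof.
move=> IM AMx; rewrite /G !indicE mem_set // memNset ?mulr0 ?subr0 //.
exact: atom_notin_B.
Qed.

Lemma generator_B M x : atom_idx N M -> B M x -> G M x = - r M.
Proof.
move=> IM BMx; rewrite /G !indicE (mem_set BMx) memNset ?mulr1 ?sub0r //.
by move=> AMx; exact: atom_notin_B AMx BMx.
Qed.

Lemma tail_cst_sub_generator M h b : atom_idx N M -> (0 < mu (B M))%E ->
  measurable_fun setT h -> tail_cst M.+1 h b ->
  exists x0 b', tail_cst M (h \- cst x0 \* G M) b'.
Proof.
move=> IM Bpos mh [hb hC]; have [a ha] := atom_ae_cst (atomA IM) (finA IM) mh.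
have r0 : 0 <= r M by rewrite divr_ge0 ?fine_ge0 ?measure_ge0.
have r1 : 1 + r M != 0 by rewrite gt_eqF //; lra.
(* [x0] equalizes the values [a - x0] on [A M] and [b + x0 * r M] on [B M]. *)
pose x0 := (a - b) / (1 + r M); exists x0, (b + x0 * r M); split.
  rewrite tail_setS //; apply: filterS2 ha hb => x hA hT [AMx|Tx] /=.
    by rewrite generator_atom // hA // /x0; field.
  by rewrite generator_B ?hT //; [ring | right].
rewrite -hC; apply: eq_Rintegral => x /set_mem Cx /=.
by rewrite generator_B //; [ring | left].
Qed.

Hypothesis ZD : forall z1 z2, Z z1 -> Z z2 -> Z (fun x => z1 x + z2 x).
Hypothesis ZZ : forall (a : R) z, Z z -> Z (fun x => a * z x).
Hypothesis ZC : forall f, Linf_fun mu f -> (forall x, ~ C x -> f x = 0) ->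
  (\int[mu]_x (f x)%:E = 0)%E -> Z_ae mu Z f.
Hypothesis ZG : forall n, atom_idx N n -> (0 < mu (B n))%E -> Z_ae mu Z (G n).

Lemma Z_ae_tail_cst0 h b : bounded_mfun h -> \int[mu]_x h x = 0 ->
  tail_cst 0 h b -> Z_ae mu Z h.
Proof.
move=> bh h0 hb; have hC := tail_cst0_ae_notin_C bh h0 hb.
have bCh : bounded_mfun (\1_C \* h) := bounded_mfunM (bounded_mfun_indic mC) bh.
have Chh : ae_equal mu (\1_C \* h) h.
  apply: filterS hC => x hx /=; rewrite indicE.
  by have [Cx|nCx] := pselect (C x); [rewrite mem_set ?mul1r | rewrite memNset ?mul0r ?hx].
apply: (Z_ae_eq Chh); apply: ZC; first exact: bounded_mfun_Linf.
  by move=> x nCx /=; rewrite indicE memNset ?mul0r.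
rewrite (ae_eq_integral (fun x => (h x)%:E)) //.
- by rewrite -EFin_Rintegral ?h0 //; exact (bounded_mfun_integrable mufin bh).
- by apply/measurable_EFinP; exact: bCh.1.
- by apply/measurable_EFinP; exact: bh.1.
- by apply: filterS Chh => x -> .
Qed.

Lemma Z_ae_tail_cst M h b : bounded_mfun h -> \int[mu]_x h x = 0 ->
  tail_cst M h b -> Z_ae mu Z h.
Proof.
elim: M h b => [|M IH] h b bh h0 hM; first exact: Z_ae_tail_cst0 hM.
have [IM|nIM] := pselect (atom_idx N M); last first.
  by apply: (IH h b) => //; rewrite /tail_cst tail_set_idxN.
have [B0|Bpos] : mu (B M) = 0%E \/ (0 < mu (B M))%E.
  by rewrite lt0e measure_ge0 andbT; case: eqP; [left|right].
  by have [b' hb'] := tail_cst_of_null IM B0 bh.1; exact: IH hb'.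
have [x0 [b' hM']] := tail_cst_sub_generator IM Bpos bh.1 hM.
have bxG := bounded_mfunM (bounded_mfun_cst x0) (bounded_mfun_generator IM).
have ZhG : Z_ae mu Z (h \- cst x0 \* G M).
  apply: IH (bounded_mfunB bh bxG) _ hM'.
  rewrite RintegralB //; first last.
  - exact (bounded_mfun_integrable mufin bxG).
  - exact (bounded_mfun_integrable mufin bh).
  rewrite h0 RintegralZl ?Rintegral_generator ?mulr0 ?subr0 //.
  exact (bounded_mfun_integrable mufin (bounded_mfun_generator IM)).
apply: Z_ae_eq (Z_aeD ZD ZhG (Z_aeZ ZZ x0 (ZG IM Bpos))).
by apply: aeW => x /=; rewrite subrK.
Qed.

Let tail_notin_C M x : tail M x -> ~ C x.
Proof. by move=> [j [Ij _] Ajx]; apply; exists j. Qed.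

Definition tail_deviation (f : T -> R) M := (f \- cst (mean mu C f)) \* \1_(tail M).

Definition tail_correction (f : T -> R) M : T -> R :=
  tail_deviation f M \+ cst (- \int[mu]_x tail_deviation f M x / fine (mu setT)).

Variable f : T -> R.
Hypotheses (bf : bounded_mfun f) (f0 : \int[mu]_x f x = 0).

Let c := mean mu C f.

Lemma bounded_mfun_tail_deviation M : bounded_mfun (tail_deviation f M).
Proof.
exact (bounded_mfunM (bounded_mfunB bf (bounded_mfun_cst c)) (bounded_mfun_indic (mtail M))).
Qed.

Lemma bounded_mfun_tail_correction M : bounded_mfun (tail_correction f M).
Proof. exact: bounded_mfunD (bounded_mfun_tail_deviation M) (bounded_mfun_cst _). Qed.

Lemma Rintegral_tail_deviation M :
  \int[mu]_x tail_deviation f M x = \int[mu]_(x in tail M) (f x - c).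
Proof. by rewrite -[RHS]Rintegral_mulr_indic. Qed.

Lemma Rintegral_tail_deviationMr M (g : T -> R) :
  \int[mu]_x (tail_deviation f M x * g x) = \int[mu]_(x in tail M) ((f x - c) * g x).
Proof.
rewrite -[RHS]Rintegral_mulr_indic; apply: eq_Rintegral => x _ /=.
by rewrite mulrAC.
Qed.

Let tail_deviation_in M x : tail M x -> tail_deviation f M x = f x - c.
Proof. by move=> Tx; rewrite /tail_deviation /= indicE mem_set ?mulr1. Qed.

Let tail_deviation_C M x : C x -> tail_deviation f M x = 0.
Proof. by move=> Cx; rewrite /tail_deviation /= indicE memNset ?mulr0 // => /tail_notin_C. Qed.

Lemma Z_ae_sub_tail_correction M : Z_ae mu Z (f \- tail_correction f M).
Proof.
have bpsi := bounded_mfun_tail_deviation M.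
have ipsi := bounded_mfun_integrable mufin bpsi.
have icst a := bounded_mfun_integrable mufin (bounded_mfun_cst a).
apply: (@Z_ae_tail_cst M _ (c + \int[mu]_x tail_deviation f M x / fine (mu setT))).
- exact: bounded_mfunB bf (bounded_mfun_tail_correction M).
- rewrite RintegralB //; first last.
  + exact (bounded_mfun_integrable mufin (bounded_mfun_tail_correction M)).
  + exact (bounded_mfun_integrable mufin bf).
  rewrite f0 RintegralD // Rintegral_cst // sub0r; apply/eqP; rewrite oppr_eq0; apply/eqP.
  have [T0|Tn0] := eqVneq (fine (mu setT)) 0; last by rewrite mulNr divfK ?addrN.
  rewrite T0 mulr0 addr0 /Rintegral null_set_integral //.
    by apply/measurable_EFinP; exact: bpsi.1.
  by apply/eqP; rewrite -fine_eq0 ?T0 ?finite_measure_fin_num.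
split.
  by apply: aeW => x Tx; rewrite /tail_correction /= tail_deviation_in //; ring.
rewrite -(Rintegral_subr_mean mufin mC bf); apply: eq_Rintegral => x /set_mem Cx.
by rewrite /tail_correction /= tail_deviation_C //; rewrite /c; ring.
Qed.

Lemma tail_correction_cvg0 (g : T -> R) : mu.-integrable setT (EFin \o g) ->
  \int[mu]_x (tail_correction f M x * g x) @[M --> \oo] --> 0.
Proof.
move=> ig; have bfc := bounded_mfunB bf (bounded_mfun_cst c).
have tail0 h : mu.-integrable setT (EFin \o h) ->
    \int[mu]_(x in tail M) h x @[M --> \oo] --> 0.
  exact: Rintegral_vanishing_sets_cvg0 mtail (tail_set_near_notin disjA).
have -> : (fun M => \int[mu]_x (tail_correction f M x * g x)) = (fun M =>
    \int[mu]_(x in tail M) ((f x - c) * g x) +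
    - (\int[mu]_(x in tail M) (f x - c) / fine (mu setT)) * \int[mu]_x g x).
  apply/funext => M; under eq_Rintegral do rewrite /tail_correction /= mulrDl.
  rewrite [LHS]RintegralD //; first last.
  - exact (bounded_mfun_integrableMl (bounded_mfun_cst _) ig).
  - exact: bounded_mfun_integrableMl (bounded_mfun_tail_deviation M) ig.
  by rewrite RintegralZl // Rintegral_tail_deviationMr Rintegral_tail_deviation.
have -> : 0 = 0 + - (0 / fine (mu setT)) * \int[mu]_x g x by rewrite mul0r oppr0 mul0r addr0.
have i1 := bounded_mfun_integrableMl bfc ig.
have i2 := bounded_mfun_integrable mufin bfc.
apply: cvgD (tail0 _ i1) _.
exact: cvgMr_tmp (cvgN (cvgMr_tmp (tail0 _ i2))).
Qed.

End atomic_part.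

Theorem lemma2p1 (d : measure_display) (T : measurableType d) (R : realType)
  (mu : {measure set T -> \bar R})
  (N : option nat) (A : nat -> set T) (Z : set (T -> R)) :
  (mu setT < +oo)%E ->
  (* the atoms A_n, n in the index set, are pairwise disjoint atoms *)
  (forall n, atom_idx N n -> is_atom mu (A n)) ->
  (forall n m, atom_idx N n -> atom_idx N m -> n <> m -> A n `&` A m = set0) ->
  (* arranged in decreasing order of measure *)
  (forall n, atom_idx N n.+1 -> (mu (A n.+1) <= mu (A n))%E) ->
  let C := ~` \bigcup_(n in [set n | atom_idx N n]) A n in
  (* they are all the atoms: C contains no atom *)
  (forall E, E `<=` C -> ~ is_atom mu E) ->
  let B := fun n => C `|` \bigcup_(j in [set j | atom_idx N j /\ (n < j)%N]) A j in
  (* Z is a linear subspace of L_infty(mu) *)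
  (forall z, Z z -> Linf_fun mu z) ->
  Z (fun _ => 0) ->
  (forall z1 z2, Z z1 -> Z z2 -> Z (fun x => z1 x + z2 x)) ->
  (forall (a : R) z, Z z -> Z (fun x => a * z x)) ->
  (* Z contains L^0_infty(C, mu) *)
  (forall f, Linf_fun mu f -> (forall x, ~ C x -> f x = 0) ->
     (\int[mu]_x (f x)%:E = 0)%E -> exists2 z, Z z & ae_equal mu z f) ->
  (* Z contains 1_{A_n} - mu(A_n)/mu(B_n) 1_{B_n} whenever mu(B_n) > 0 *)
  (forall n, atom_idx N n -> (0 < mu (B n))%E ->
     exists2 z, Z z & ae_equal mu z
       (fun x => \1_(A n) x - fine (mu (A n)) / fine (mu (B n)) * \1_(B n) x)) ->
  (* conclusion: L^0_infty is contained in the weak* closure of Z *)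
  forall f, Linf_fun mu f -> (\int[mu]_x (f x)%:E = 0)%E ->
    weakstar_closure mu Z f.
Proof.
move=> mufin atomA disjA _ C _ B Zmeas _ ZD ZZ ZC ZG f Lf f0.
have [g bg fg] := Linf_fun_ae_bounded_mfun Lf.
have g0 : \int[mu]_x g x = 0.
  rewrite /Rintegral (ae_eq_integral (fun x => (f x)%:E)) ?f0 //.
  - exact/measurable_EFinP/bg.1.
  - exact/measurable_EFinP/Lf.1.
  - by apply: filterS fg => x ->.
apply: (weakstar_closure_of_approx Zmeas Lf.1 (bounded_mfun_tail_correction atomA bg)).
- move=> M; have := Z_ae_sub_tail_correction mufin atomA disjA ZD ZZ ZC ZG bg g0 M.
  by apply: Z_ae_eq; apply: filterS fg => x /= ->.
- by move=> h ih; exact (tail_correction_cvg0 mufin atomA disjA bg ih).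
Qed.
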